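(* Let $t,a_1,\dots,a_n\in\mathbb{C}$ and \[P(x,y)=\prod_{i=1}^n\big((x-a_i)^2-y\big)+t\in\mathbb{C}[x,y].\] If the $a_i$ are pairwise distinct and $t\neq 0$, then $P(x,y)$ is irreducible in $\mathbb{C}[x,y]$. *)

From mathcomp Require Import all_boot all_order all_algebra.
From mathcomp Require Import complex.
From mathcomp Require Import reals.
Set Implicit Arguments. Unset Strict Implicit. Unset Printing Implicit Defensive.
Import GRing.Theory Num.Theory.
Local Open Scope ring_scope.

Definition irreducible_elt (A : comUnitRingType) (p : A) : Prop :=
  [/\ p != 0, p \isn't a GRing.unit &
      forall q r : A, p = q * r -> q \is a GRing.unit \/ r \is a GRing.unit].

(* C[x,y] is represented as {poly {poly C}}: the outer variable is x,
   the inner (coefficient) variable is y. *)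
Definition Ypoly (C : nzRingType) : {poly {poly C}} := ('X : {poly C})%:P.

Definition Ppoly (C : comNzRingType) (n : nat) (a : 'I_n -> C) (t : C)
  : {poly {poly C}} :=
  \prod_(i < n) (('X - (a i)%:P%:P) ^+ 2 - Ypoly C) + t%:P%:P.

From HB Require Import structures.
From mathcomp Require Import all_boot all_order all_algebra.
From mathcomp Require Import ring zify.
From mathcomp Require Import complex reals.
Import GRing.Theory Num.Theory.
Set Implicit Arguments. Unset Strict Implicit. Unset Printing Implicit Defensive.
Local Open Scope ring_scope.

(* The substitution Phi : x |-> x + y, y |-> (x - y)^2 maps each factor
   (x - a_i)^2 - y to 4 (y - r_i)(x - r_i) with r_i = a_i / 2, hence P to
   G = 4^n g(y) g(x) + t where g = prod_i ('X - r_i).  Phi is an injective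
   ring endomorphism of C[x,y] fixing constants (composed with the inverse
   linear substitution it becomes y |-> y^2), so P is irreducible as soon as
   every factorization Q * R = G has a constant factor.  Setting y = r_i
   turns G into the nonzero constant t, so if Q has positive x-degree its
   leading coefficient (a polynomial in y) vanishes at the n distinct r_i and
   Q has y-degree >= n.  Since G has degree n in x and, being symmetric, in y,
   counting degrees leaves one factor of degree 0 in both variables. *)

Section BivariateSubstitution.
Variable C : comNzRingType.
Local Notation A := {poly {poly C}}.

Definition constXY : {rmorphism C -> A} := (polyC \o polyC)%FUN.

Lemma comm_constXY (Y0 : A) : commr_rmorph constXY Y0.
Proof. by move=> c; rewrite /GRing.comm mulrC. Qed.

Definition substY (Y0 : A) : {poly C} -> A := horner_morph (comm_constXY Y0).
HB.instance Definition _ (Y0 : A) := GRing.RMorphism.on (substY Y0).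

Lemma comm_substY (Y0 X0 : A) : commr_rmorph (substY Y0) X0.
Proof. by move=> q; rewrite /GRing.comm mulrC. Qed.

Definition substXY (X0 Y0 : A) : A -> A := horner_morph (comm_substY Y0 X0).
HB.instance Definition _ (X0 Y0 : A) := GRing.RMorphism.on (substXY X0 Y0).

Lemma substXY_X X0 Y0 : substXY X0 Y0 'X = X0.
Proof. exact: horner_morphX. Qed.

Lemma substXY_Y X0 Y0 : substXY X0 Y0 'Y = Y0.
Proof. by rewrite /substXY horner_morphC; apply: horner_morphX. Qed.

Lemma substXY_C X0 Y0 c : substXY X0 Y0 c%:P%:P = c%:P%:P.
Proof. by rewrite /substXY horner_morphC; apply: horner_morphC. Qed.

Lemma substXY_morph (f : {rmorphism A -> A}) X0 Y0 p :
    (forall c, f c%:P%:P = c%:P%:P) ->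
  f (substXY X0 Y0 p) = substXY (f X0) (f Y0) p.
Proof.
move=> fC; rewrite /substXY /horner_morph -horner_map -map_poly_comp.
congr (_.[_]); apply: eq_map_poly => q /=.
rewrite /substY /horner_morph -horner_map -map_poly_comp.
by congr (_.[_]); apply: eq_map_poly => c /=; rewrite fC.
Qed.

Lemma substXY_comp X1 Y1 X0 Y0 p :
  substXY X1 Y1 (substXY X0 Y0 p)
  = substXY (substXY X1 Y1 X0) (substXY X1 Y1 Y0) p.
Proof. by apply: substXY_morph => c; apply: substXY_C. Qed.

End BivariateSubstitution.

(* The substitution y |-> y^2 is injective: it maps each coefficient q(y)
   to q(y^2). *)
Lemma substXY_square_inj (C : idomainType) :
  injective (substXY 'X ('Y ^+ 2) : {poly {poly C}} -> _).
Proof.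
have Esq (p : {poly {poly C}}) :
    substXY 'X ('Y ^+ 2) p = map_poly (fun q => q \Po 'X^2) p.
  rewrite /substXY /horner_morph -[RHS]comp_polyXr.
  congr (_.[_]); rewrite -map_poly_comp; apply: eq_map_poly => q /=.
  by rewrite /substY /horner_morph /comp_poly -rmorphXn -horner_map /= -map_poly_comp.
apply: raddf_inj => p /=; rewrite Esq => /polyP p0; apply/polyP => i.
move: (p0 i); rewrite !coef0 coef_map_id0 ?comp_poly0 // => /eqP.
by rewrite comp_poly_eq0 ?size_polyXn // => /eqP.
Qed.

Definition nz_constXY (C : nzRingType) (p : {poly {poly C}}) : Prop :=
  exists2 c : C, c != 0 & p = c%:P%:P.

Lemma nz_constXY_of_sizes (C : idomainType) (p : {poly {poly C}}) :
  p != 0 -> (size p <= 1)%N -> (sizeY p <= 1)%N -> nz_constXY p.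
Proof.
move=> p0 sp syp; have sp0 := leq_trans (max_size_coefXY p 0) syp.
have Ep : p = (p`_0`_0)%:P%:P by rewrite {1}(size1_polyC sp) {1}(size1_polyC sp0).
by exists p`_0`_0 => //; apply: contra_neq p0 => p000; rewrite Ep p000.
Qed.

Lemma lead_coef_factor_root (C : idomainType) (F Q R : {poly {poly C}}) x k :
    Q * R = F -> map_poly (horner_eval x) F = k%:P -> k != 0 ->
  (1 < size Q)%N -> root (lead_coef Q) x.
Proof.
move=> QR Fx k0 sQ; pose spec := map_poly (horner_eval x) : {poly {poly C}} -> _.
have spec_QR : spec Q * spec R = k%:P by rewrite -rmorphM /= QR.
have /andP[sQx _] : (size (spec Q) == 1) && (size (spec R) == 1).
  by rewrite -size_mul_eq1 spec_QR size_polyC k0.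
apply/rootP; have := coef_map (horner_eval x) Q (size Q).-1.
by rewrite -/spec nth_default ?(eqP sQx) // -ltnS (ltn_predK sQ).
Qed.

Section SymmetricProduct.
Variable C : idomainType.
Variables (rs : seq C) (c t : C).
Hypotheses (rs_uniq : uniq rs) (rs_nonempty : (0 < size rs)%N).
Hypotheses (c0 : c != 0) (t0 : t != 0).

Definition gpoly : {poly C} := \prod_(r <- rs) ('X - r%:P).
Definition Gpoly : {poly {poly C}} := c%:P%:P * (gpoly%:P * gpoly^:P) + t%:P%:P.

Lemma size_gpoly : size gpoly = (size rs).+1.
Proof. exact: size_prod_XsubC. Qed.

Lemma gpoly_neq0 : gpoly != 0.
Proof. by rewrite -size_poly_eq0 size_gpoly. Qed.

Lemma size_Gpoly : size Gpoly = (size rs).+1.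
Proof.
have cg0 : c%:P * gpoly != 0 by rewrite mulf_neq0 ?polyC_eq0 ?gpoly_neq0.
rewrite /Gpoly mulrA -polyCM size_polyDl size_Cmul ?size_map_polyC ?size_gpoly //.
by rewrite (leq_ltn_trans (size_polyC_leq1 _)) // size_Cmul // size_map_polyC size_gpoly.
Qed.

(* G is symmetric in x and y, so it also has degree n in y. *)
Lemma sizeY_Gpoly : sizeY Gpoly = (size rs).+1.
Proof.
rewrite sizeYE /Gpoly rmorphD !rmorphM /= !swapXY_polyC swapXY_map_polyC.
by rewrite !map_polyC /= [gpoly^:P * _]mulrC -size_Gpoly.
Qed.

(* Hence G is not a unit: units of C[x,y] are constants. *)
Lemma Gpoly_nonunit : Gpoly \isn't a GRing.unit.
Proof. by rewrite poly_unitE size_Gpoly eqSS; case: (size rs) rs_nonempty. Qed.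

Lemma Gpoly_at_root x : x \in rs -> map_poly (horner_eval x) Gpoly = t%:P.
Proof.
move=> xrs; rewrite /Gpoly rmorphD !rmorphM /= !map_polyC /= /horner_eval.
have -> : gpoly.[x] = 0 by apply/rootP; rewrite root_prod_XsubC.
by rewrite mul0r mulr0 add0r hornerC.
Qed.

Lemma sizeY_factor Q R : Q * R = Gpoly -> (1 < size Q)%N -> (size rs < sizeY Q)%N.
Proof.
move=> QR sQ; apply: leq_trans (max_size_lead_coefXY Q).
apply: max_poly_roots rs_uniq.
  by rewrite lead_coef_eq0 -size_poly_gt0 ltnW.
apply/allP => x xrs; apply: lead_coef_factor_root QR (Gpoly_at_root xrs) t0 sQ.
Qed.

(* Degree count: degX Q + degX R = n = degY Q + degY R, and a factor of
   positive x-degree takes all of the y-degree; so one factor is constant. *)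
Lemma Gpoly_factor Q R : Q * R = Gpoly -> nz_constXY Q \/ nz_constXY R.
Proof.
move=> QR; have RQ : R * Q = Gpoly by rewrite mulrC.
have G0 : Gpoly != 0 by rewrite -size_poly_eq0 size_Gpoly.
have [Q0 R0] : Q != 0 /\ R != 0.
  by split; apply: contra_neq G0 => p0; rewrite -QR p0 ?mul0r ?mulr0.
have degX : (size Q + size R).-1 = (size rs).+1.
  by rewrite -size_mul // QR size_Gpoly.
have degY : (sizeY Q + sizeY R).-1 = (size rs).+1.
  by rewrite !sizeYE -size_mul ?swapXY_eq0 // -rmorphM QR -sizeYE sizeY_Gpoly.
have := size_poly_gt0 Q; have := size_poly_gt0 R; rewrite Q0 R0.
have := sizeY_eq0 Q; have := sizeY_eq0 R; rewrite (negbTE Q0) (negbTE R0).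
move: degX degY; rewrite -!subn1 => degX degY /eqP syR /eqP syQ sR sQ.
have LQ := @sizeY_factor Q R QR; have LR := @sizeY_factor R Q RQ.
case: (ltnP 1 (size Q)) => hQ; case: (ltnP 1 (size R)) => hR.
- by have := LQ hQ; have := LR hR; lia.
- by right; apply: nz_constXY_of_sizes => //; have := LQ hQ; lia.
- by left; apply: nz_constXY_of_sizes => //; have := LR hR; lia.
- lia.
Qed.

End SymmetricProduct.

Section ChangeOfVariables.
Variable C : fieldType.
Hypothesis two_neq0 : (2 : C) != 0.
Local Notation A := {poly {poly C}}.
Local Notation Phi := (substXY ('X + 'Y) (('X - 'Y) ^+ 2) : A -> A).

(* Composing with the inverse linear map x |-> (x + y)/2, y |-> (x - y)/2
   gives y |-> y^2, which is injective. *)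
Lemma Phi_inj : injective Phi.
Proof.
pose half : A := (2^-1)%:P%:P.
have half2 : half *+ 2 = 1 by rewrite -!rmorphMn /= -mulr_natr mulVf.
pose Lam := substXY (('X + 'Y) * half) (('X - 'Y) * half).
have LamX : Lam ('X + 'Y) = 'X.
  rewrite /Lam rmorphD /= substXY_X substXY_Y.
  by rewrite -[RHS]mulr1 -half2; ring.
have LamY : Lam (('X - 'Y) ^+ 2) = 'Y ^+ 2.
  rewrite /Lam rmorphXn raddfB /= substXY_X substXY_Y.
  by rewrite -[X in _ = X ^+ 2]mulr1 -half2; ring.
apply: (@inj_compr _ _ _ Lam); apply: eq_inj (@substXY_square_inj C) _ => p.
by rewrite /Lam /= substXY_comp -/Lam LamX LamY.
Qed.

Lemma Phi_factor a :
  Phi (('X - a%:P%:P) ^+ 2 - 'Y)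
  = 4%:P%:P * (('Y - (a / 2)%:P%:P) * ('X - (a / 2)%:P%:P)).
Proof.
rewrite raddfB /= rmorphXn raddfB /= substXY_X substXY_Y substXY_C.
have {1}-> : a = a / 2 *+ 2 by rewrite -mulr_natr mulfVK.
by rewrite !rmorphMn /= !polyC1; ring.
Qed.

Lemma Phi_Ppoly n (a : 'I_n -> C) t :
  Phi (Ppoly a t) = Gpoly [seq a i / 2 | i <- enum 'I_n] (4 ^+ n) t.
Proof.
rewrite /Ppoly /Gpoly /gpoly rmorphD /= substXY_C rmorph_prod; congr (_ + _).
rewrite big_map big_enum /= rmorph_prod map_prod_XsubC /=.
have -> : (4 ^+ n)%:P%:P = \prod_(i in 'I_n) 4%:P%:P :> A.
  by rewrite prodr_const card_ord !rmorphXn.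
rewrite -!big_split /=; apply: eq_big => // i _.
by rewrite Phi_factor raddfB.
Qed.
End ChangeOfVariables.

Lemma nz_constXY_unit (C : fieldType) (p : {poly {poly C}}) :
  nz_constXY p -> p \is a GRing.unit.
Proof.
case=> c c0 ->; rewrite poly_unitE size_polyC polyC_eq0 c0 coefC /=.
by rewrite poly_unitE size_polyC c0 coefC unitfE.
Qed.

Lemma irreducible_of_image (C : fieldType)
    (f : {rmorphism {poly {poly C}} -> {poly {poly C}}}) p :
    injective f -> (forall c, f c%:P%:P = c%:P%:P) ->
    f p \isn't a GRing.unit ->
    (forall Q R, Q * R = f p -> nz_constXY Q \/ nz_constXY R) ->
  irreducible_elt p.
Proof.
move=> finj fC fpU fact.
have unit_back q : nz_constXY (f q) -> q \is a GRing.unit.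
  case=> c c0 fq; apply: nz_constXY_unit; exists c => //.
  by apply: finj; rewrite fq fC.
have no_const0 : ~ nz_constXY (0 : {poly {poly C}}).
  by case=> c c0 /esym/eqP; rewrite !polyC_eq0 (negbTE c0).
split.
- apply/eqP => p0; have [] // := fact 0 0; by rewrite mul0r p0 rmorph0.
- by apply/negP => /(rmorph_unit f); apply/negP.
- move=> q r pqr; have fqr : f q * f r = f p by rewrite -rmorphM pqr.
  by case: (fact _ _ fqr) => /unit_back; [left | right].
Qed.

Theorem mainTheorem2 (R : realType) (n : nat) (hn : (0 < n)%N)
    (a : 'I_n -> R[i]) (t : R[i]) :
  injective a -> t != 0 -> irreducible_elt (Ppoly a t).
Proof.
move=> a_inj t0; set rs := [seq a i / 2 | i <- enum 'I_n].
have two0 : (2 : R[i]) != 0 by rewrite pnatr_eq0.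
have rs_uniq : uniq rs.
  rewrite map_inj_uniq ?enum_uniq // => i j.
  by move/(mulIf (invr_neq0 two0))/a_inj.
have rs_nonempty : (0 < size rs)%N by rewrite size_map size_enum_ord.
have four0 : (4 ^+ n : R[i]) != 0 by rewrite expf_neq0 // pnatr_eq0.
apply: (irreducible_of_image (Phi_inj two0)); first exact: substXY_C.
- by rewrite /= (Phi_Ppoly two0); apply: Gpoly_nonunit rs_nonempty four0.
- by rewrite /= (Phi_Ppoly two0); apply: Gpoly_factor rs_uniq rs_nonempty four0 t0.
Qed.
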